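(* Consider $m$ agents $i=1,\ldots,m$ with data generated as described in the context. Fix $\hat{\delta}>0$ and a time $t\ge\max(t_1,t_2,t_3)$, where $t_1=8n+16\log\frac{2}{\hat\delta}$, $t_2=\left(\frac{16\hat{\mu}(\sqrt{4n}+\sqrt{2\log\frac{2}{\hat\delta}})}{\sigma_x}\right)^2$, $t_3=2(n+l)\log\frac{1}{\hat\delta}$. On the event $E_3$ defined in the context, the matrix $\bar\beta_{t+1}=\frac1m\sum_{i=1}^m\sum_{j=1}^tx_{i,j}x_{i,j}^*$ satisfies $$\|\bar\beta_{t+1}^{-1}\|\le\frac{8}{\sigma_x^2t}.$$
   Context: Data model: each agent $i\in\{1,\dots,m\}$ observes at times $j=1,2,\ldots$ pairs $(x_{i,j},y_{i,j})$ with $y_{i,j}=\Theta x_{i,j}+\eta_{i,j}$, $\Theta\in\mathbb{R}^{l\times n}$ unknown, $x_{i,j}\sim\mathcal{N}(\mu_{i,j},\sigma_x^2I_n)$, $\eta_{i,j}\sim\mathcal{N}(0,\sigma_\eta^2I_l)$, all mutually independent over time and agents, with deterministic means and $\sup_{i,j}\|\mu_{i,j}\|=\hat\mu<\infty$; $\sigma_x,\sigma_\eta>0$. Let $\bar{\mu}_{i,t}=\frac{4}{t\sigma_x^2}\sum_{j=1}^t\mu_{i,j}\mu_{i,j}^*$. The event $E_3$ is the intersection over all $i=1,\ldots,m$ of $\{\|\sum_{j=1}^tx_{i,j}x_{i,j}^*\|\le t(\frac{19}{8}\sigma_x^2+\hat\mu^2)\}$, $\{\lambda_{\min}(\sum_{j=1}^tx_{i,j}x_{i,j}^*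 )\ge\frac{t\sigma_x^2}{8}\lambda_{\min}(I_n+\bar\mu_{i,t})\}$, and $\{\|\sum_{j=1}^t\eta_{i,j}x_{i,j}^*\|\le\sqrt t\,\sigma_\eta(4\sigma_x\sqrt{(n+l)\log\frac9{\hat\delta}}+\hat\mu(\sqrt{2(l+n)}+\sqrt{2\log\frac2{\hat\delta}}))\}$. $\|\cdot\|$ is the spectral norm, $A^*$ the transpose, $\lambda_{\min}$ the smallest eigenvalue. *)

From HB Require Import structures.
From mathcomp Require Import all_boot all_order all_algebra.
From mathcomp Require Import all_classical all_reals.
From mathcomp Require Import exp.
Set Implicit Arguments. Unset Strict Implicit. Unset Printing Implicit Defensive.
Import Order.TTheory GRing.Theory Num.Theory.
Local Open Scope ring_scope.
Local Open Scope classical_set_scope.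

Definition vnorm {R : realType} {k : nat} (v : 'cV[R]_k) : R :=
  Num.sqrt (\sum_(i < k) v i 0 ^+ 2).

Definition opnorm {R : realType} {p q : nat} (A : 'M[R]_(p, q)) : R :=
  sup [set vnorm (A *m v) | v in [set v : 'cV[R]_q | vnorm v <= 1]].

Definition lambda_min {R : realType} {k : nat} (A : 'M[R]_k) : R :=
  inf [set a : R | eigenvalue A a].

Definition gram {R : realType} {n : nat} (x : nat -> 'cV[R]_n) (t : nat) : 'M[R]_n :=
  \sum_(1 <= j < t.+1) (x j *m (x j)^T).

Definition mubar {R : realType} {n : nat} (sx : R) (mu : nat -> 'cV[R]_n) (t : nat)
  : 'M[R]_n :=
  (4 / (t%:R * sx ^+ 2)) *: \sum_(1 <= j < t.+1) (mu j *m (mu j)^T).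

(* the event E_3, evaluated at a realization (x, eta) *)
Definition E3 {R : realType} (m n l : nat) (sx seta muhat dhat : R) (t : nat)
  (mu : 'I_m -> nat -> 'cV[R]_n)
  (x : 'I_m -> nat -> 'cV[R]_n) (eta : 'I_m -> nat -> 'cV[R]_l) : Prop :=
  forall i : 'I_m,
    [/\ opnorm (gram (x i) t) <= t%:R * (19 / 8 * sx ^+ 2 + muhat ^+ 2),
        lambda_min (gram (x i) t) >=
          (t%:R * sx ^+ 2 / 8) * lambda_min (1%:M + mubar sx (mu i) t)
      & opnorm (\sum_(1 <= j < t.+1) (eta i j *m (x i j)^T)) <=
          Num.sqrt t%:R * seta *
            (4 * sx * Num.sqrt ((n + l)%:R * ln (9 / dhat))
             + muhat * (Num.sqrt (2 * (l + n)%:R) + Num.sqrt (2 * ln (2 / dhat))))].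

(* For a symmetric matrix the smallest eigenvalue is the minimum of the
   Rayleigh quotient: the quadratic form attains its minimum q on the compact
   unit sphere, the minimiser is an eigenvector for q, and q is below every
   eigenvalue.  On E_3, lambda_min of each Gram matrix is at least
   c = t sx^2 / 8 times lambda_min (1 + mubar), and the latter is at least 1
   because mubar is positive semidefinite.  So each Gram matrix, and hence
   their average B, satisfies w B w^T >= c |w|^2; such a B is invertible with
   |B^-1 v| <= |v| / c. *)

From mathcomp Require Import all_boot all_order all_algebra.
From mathcomp Require Import all_classical all_reals.
From mathcomp Require Import exp topology normedtype derive.
From mathcomp Require Import ring lra.
Import Order.TTheory GRing.Theory Num.Theory.
Import numFieldNormedType.Exports.
Local Open Scope ring_scope.
Local Open Scope classical_set_scope.

Set Implicit Arguments.
Unset Strict Implicit.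
Unset Printing Implicit Defensive.

Lemma invmx0 (R : comUnitRingType) k : (0 < k)%N -> invmx (0 : 'M[R]_k) = 0.
Proof. by case: k => // k _; rewrite invmx_out // inE unitmxE det0 unitr0. Qed.

Lemma trmx_outer_sum (R : comRingType) k I (r : seq I) (y : I -> 'cV[R]_k) :
  (\sum_(j <- r) y j *m (y j)^T)^T = \sum_(j <- r) y j *m (y j)^T.
Proof. by rewrite linear_sum; apply: eq_bigr => j _ /=; rewrite trmx_mul trmxK. Qed.

Section DotProduct.
Variable R : realFieldType.
Implicit Types (k : nat) (e : R).

(* Row vectors, because [eigenvalue] is defined by [v *m S = a *: v]. *)
Definition dotmx {k} (a b : 'rV[R]_k) : R := (a *m b^T) 0 0.

Lemma dotmxE k (a b : 'rV[R]_k) : dotmx a b = \sum_i a 0 i * b 0 i.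
Proof. by rewrite /dotmx mxE; apply: eq_bigr => i _; rewrite mxE. Qed.

Lemma dotmxC k (a b : 'rV[R]_k) : dotmx a b = dotmx b a.
Proof. by rewrite !dotmxE; apply: eq_bigr => i _; rewrite mulrC. Qed.

Lemma dotmxDl k (a b c : 'rV[R]_k) : dotmx (a + b) c = dotmx a c + dotmx b c.
Proof. by rewrite /dotmx mulmxDl mxE. Qed.

Lemma dotmxZl k e (a b : 'rV[R]_k) : dotmx (e *: a) b = e * dotmx a b.
Proof. by rewrite /dotmx -scalemxAl mxE. Qed.

Lemma dotmxNl k (a b : 'rV[R]_k) : dotmx (- a) b = - dotmx a b.
Proof. by rewrite -scaleN1r dotmxZl mulN1r. Qed.

Lemma dotmxDr k (a b c : 'rV[R]_k) : dotmx a (b + c) = dotmx a b + dotmx a c.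
Proof. by rewrite dotmxC dotmxDl !(dotmxC a). Qed.

Lemma dotmxZr k e (a b : 'rV[R]_k) : dotmx a (e *: b) = e * dotmx a b.
Proof. by rewrite dotmxC dotmxZl dotmxC. Qed.

Lemma dotmxNr k (a b : 'rV[R]_k) : dotmx a (- b) = - dotmx a b.
Proof. by rewrite dotmxC dotmxNl dotmxC. Qed.

Lemma dotmx0l k (a : 'rV[R]_k) : dotmx 0 a = 0.
Proof. by rewrite /dotmx mul0mx mxE. Qed.

Lemma dotmx_suml k I (r : seq I) (P : pred I) (F : I -> 'rV[R]_k) b :
  dotmx (\sum_(i <- r | P i) F i) b = \sum_(i <- r | P i) dotmx (F i) b.
Proof. by rewrite /dotmx mulmx_suml summxE. Qed.

Lemma dotmx_mulmxl p k (M : 'M[R]_(p, k)) (a : 'rV[R]_p) (b : 'rV[R]_k) :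
  dotmx (a *m M) b = dotmx a (b *m M^T).
Proof. by rewrite /dotmx trmx_mul trmxK mulmxA. Qed.

Lemma dotmx_ge0 k (a : 'rV[R]_k) : 0 <= dotmx a a.
Proof. by rewrite dotmxE; apply: sumr_ge0 => i _; rewrite -expr2 sqr_ge0. Qed.

Lemma dotmx_eq0 k (a : 'rV[R]_k) : (dotmx a a == 0) = (a == 0).
Proof.
apply/idP/eqP => [|->]; last by rewrite dotmx0l.
rewrite dotmxE psumr_eq0 => [/allP a0|i _]; last by rewrite -expr2 sqr_ge0.
apply/rowP => i; have := a0 i (mem_index_enum _).
by rewrite /= -expr2 sqrf_eq0 mxE => /eqP.
Qed.

Lemma dotmx_gt0 k (a : 'rV[R]_k) : a != 0 -> 0 < dotmx a a.
Proof. by rewrite lt_def dotmx_eq0 dotmx_ge0 andbT. Qed.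

End DotProduct.

Section Coercive.
Variable R : realFieldType.

Definition coercive {k} (c : R) (S : 'M[R]_k) :=
  forall w : 'rV_k, c * dotmx w w <= dotmx (w *m S) w.

Lemma coercive_le k c c' (S : 'M[R]_k) : c' <= c -> coercive c S -> coercive c' S.
Proof. by move=> c'c Sc w; apply: le_trans (Sc w); rewrite ler_wpM2r ?dotmx_ge0. Qed.

Lemma coercive_avg k m c (S : 'I_m -> 'M[R]_k) : (0 < m)%N ->
  (forall i, coercive c (S i)) -> coercive c (m%:R^-1 *: \sum_(i < m) S i).
Proof.
move=> m0 Sc w; rewrite -scalemxAr dotmxZl mulmx_sumr dotmx_suml.
rewrite ler_pdivlMl ?ltr0n //.
have := ler_sum (index_enum 'I_m) (fun i (_ : true) => Sc i w).
by rewrite sumr_const card_ord mulr_natl.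
Qed.

Lemma coercive_unitmx k c (S : 'M[R]_k) : 0 < c -> coercive c S -> S \in unitmx.
Proof.
move=> c0 Sc; rewrite unitmxE unitfE; apply/det0P => -[v v0 vS].
have := Sc v; rewrite vS dotmx0l pmulr_rle0 //.
by rewrite leNgt dotmx_gt0.
Qed.

Lemma coercive_le_eigenvalue k c a (S : 'M[R]_k) :
  coercive c S -> eigenvalue S a -> c <= a.
Proof.
by move=> Sc /eigenvalueP [v vS v0]; have := Sc v; rewrite vS dotmxZl ler_pM2r ?dotmx_gt0.
Qed.

Lemma coercive_add_outer k I (r : seq I) a (y : I -> 'cV[R]_k) : 0 <= a ->
  coercive 1 (1%:M + a *: \sum_(j <- r) y j *m (y j)^T).
Proof.
move=> a0 w; rewrite mul1r mulmxDr mulmx1 dotmxDl lerDl -scalemxAr dotmxZl.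
rewrite mulr_ge0 // mulmx_sumr dotmx_suml sumr_ge0 // => j _.
by rewrite mulmxA dotmx_mulmxl trmxK dotmx_ge0.
Qed.

Lemma quadratic_ge0_linear_coef_eq0 (a b : R) :
  (forall e, 0 <= a * e + b * e ^+ 2) -> a = 0.
Proof.
move=> ab; pose d := `|b| + 1.
have d0 : 0 < d by rewrite ltr_pwDr ?normr_ge0.
have bd : b - d <= -1 by have := ler_norm b; rewrite /d; lra.
have := ab (- a / d); set e := - a / d => abe.
have ed : e * d = - a by rewrite /e divfK ?gt_eqF.
have abd : 0 <= a ^+ 2 * (b - d).
  suff -> : a ^+ 2 * (b - d) = d ^+ 2 * (a * e + b * e ^+ 2) by rewrite mulr_ge0 ?sqr_ge0.
  by rewrite -(opprK a) -ed; ring.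
apply/eqP; rewrite -sqrf_eq0 eq_le sqr_ge0 andbT.
by have := sqr_ge0 a; nra.
Qed.

Lemma psd_isotropic_null k (P : 'M[R]_k) u :
  P^T = P -> coercive 0 P -> dotmx (u *m P) u = 0 -> u *m P = 0.
Proof.
move=> Psym Ppsd uPu; apply/eqP; rewrite -dotmx_eq0; apply/eqP.
set r := u *m P.
(* [e |-> (u + e r) P (u + e r)^T] is a nonnegative quadratic without constant
   term, so its linear coefficient [2 r r^T] vanishes. *)
suff /eqP : 2 * dotmx r r = 0 by rewrite mulf_eq0 pnatr_eq0 => /eqP.
apply: (@quadratic_ge0_linear_coef_eq0 _ (dotmx (r *m P) r)) => e.
have := Ppsd (u + e *: r); rewrite mul0r mulmxDl -scalemxAl.
rewrite !(dotmxDl, dotmxDr, dotmxZl, dotmxZr) uPu -/r add0r.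
have -> : dotmx (r *m P) u = dotmx r r by rewrite dotmx_mulmxl Psym dotmxC.
by lra.
Qed.

End Coercive.

Section SymmetricSpectrum.
Variable R : realType.

Lemma quadform_continuous k (S : 'M[R]_k) :
  continuous (fun v : 'rV[R]_k => dotmx (v *m S) v).
Proof.
have -> : (fun v : 'rV[R]_k => dotmx (v *m S) v) =
          (fun v => \sum_i (\sum_j v 0 j * S j i) * v 0 i).
  by apply: funext => v; rewrite dotmxE; apply: eq_bigr => i _; rewrite mxE.
apply: (@continuous_big R _ +%R 0 xpredT) => [|i _ v]; first exact: add_continuous.
apply: continuousM; last exact: coord_continuous.
move: v; apply: (@continuous_big R _ +%R 0 xpredT) => [|j _ v]; first exact: add_continuous.
by apply: continuousM; [exact: coord_continuous | exact: cst_continuous].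
Qed.

Lemma unit_sphere_compact k : compact [set v : 'rV[R]_k | dotmx v v = 1].
Proof.
apply: bounded_closed_compact.
  exists 1; split; first by rewrite num_real.
  move=> M M1 v /= v1; apply: ltW; apply: le_lt_trans M1.
  rewrite [leLHS]/Num.norm /= mx_normrE; apply/bigmax_leP; split => // -[i j] _ /=.
  rewrite ord1 -(ler_pXn2r (_ : 0 < 2)%N) ?nnegrE // expr1n real_normK ?num_real //.
  rewrite -v1 dotmxE (bigD1 j) //= expr2 lerDl.
  by apply: sumr_ge0 => i' _; rewrite -expr2 sqr_ge0.
have -> : [set v : 'rV[R]_k | dotmx v v = 1] = (fun v => dotmx (v *m 1%:M) v) @^-1` [set 1].
  by apply: funext => v; rewrite /preimage /= mulmx1.
apply: closed_comp => [v _|]; first exact: quadform_continuous.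
exact: closed_eq.
Qed.

Lemma sym_eigenvalue_coercive k (S : 'M[R]_k) : S^T = S -> (0 < k)%N ->
  exists2 q, eigenvalue S q & coercive q S.
Proof.
move=> Ssym k0; set A := [set v : 'rV[R]_k | dotmx v v = 1].
have A0 : A !=set0.
  exists (delta_mx 0 (Ordinal k0)).
  by rewrite /A /= /dotmx trmx_delta mul_delta_mx mxE !eqxx.
have [u /[!inE] u1 umin] := EVT_min_rV A0 (@unit_sphere_compact k)
  (continuous_subspaceT (@quadform_continuous _ S)).
set q := dotmx (u *m S) u.
(* The minimiser [u] makes [S - q%:M] positive semidefinite and isotropic at [u]. *)
have Sq : coercive q S.
  move=> w; have [->|w0] := eqVneq w 0; first by rewrite mul0mx !dotmx0l mulr0.
  have w_gt0 := dotmx_gt0 w0; set c := (Num.sqrt (dotmx w w))^-1.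
  have c2 : c ^+ 2 = (dotmx w w)^-1 by rewrite exprVn sqr_sqrtr ?ltW.
  have := umin (c *: w); rewrite !inE /A /= -scalemxAl !(dotmxZl, dotmxZr) !mulrA -expr2 c2.
  move=> /(_ (mulVf (lt0r_neq0 w_gt0))).
  by rewrite ler_pdivlMl // mulrC.
exists q => //; apply/eigenvalueP; exists u; last first.
  by apply/eqP => u0; move: u1; rewrite /A /= u0 dotmx0l => /esym/eqP; rewrite oner_eq0.
have qform w : dotmx (w *m (S - q%:M)) w = dotmx (w *m S) w - q * dotmx w w.
  by rewrite mulmxBr mul_mx_scalar dotmxDl dotmxNl dotmxZl.
apply/eqP; rewrite -subr_eq0 -mul_mx_scalar -mulmxBr; apply/eqP.
apply: psd_isotropic_null.
- by rewrite linearB /= tr_scalar_mx Ssym.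
- by move=> w; rewrite mul0r qform subr_ge0.
- by rewrite qform u1 mulr1 subrr.
Qed.

Lemma lambda_min_coercive k (S : 'M[R]_k) : S^T = S -> (0 < k)%N ->
  coercive (lambda_min S) S.
Proof.
move=> Ssym k0; have [q Sq qS] := sym_eigenvalue_coercive Ssym k0.
have Slb : has_lbound [set a | eigenvalue S a].
  by exists q => a; apply: coercive_le_eigenvalue.
exact: coercive_le (ge_inf Slb Sq) qS.
Qed.

Lemma coercive_le_lambda_min k c (S : 'M[R]_k) : S^T = S -> (0 < k)%N ->
  coercive c S -> c <= lambda_min S.
Proof.
move=> Ssym k0 cS; have [q Sq _] := sym_eigenvalue_coercive Ssym k0.
by apply: lb_le_inf; [exists q | move=> a; apply: coercive_le_eigenvalue].
Qed.

End SymmetricSpectrum.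

Section OperatorNorm.
Variable R : realType.

Lemma vnorm_dotmx k (v : 'cV[R]_k) : vnorm v = Num.sqrt (dotmx v^T v^T).
Proof.
by rewrite /vnorm dotmxE; congr Num.sqrt; apply: eq_bigr => i _; rewrite !mxE expr2.
Qed.

Lemma vnorm0 k : vnorm (0 : 'cV[R]_k) = 0.
Proof. by rewrite vnorm_dotmx trmx0 dotmx0l sqrtr0. Qed.

Lemma opnorm_le p q (A : 'M[R]_(p, q)) b :
  (forall v, vnorm v <= 1 -> vnorm (A *m v) <= b) -> opnorm A <= b.
Proof.
move=> Ab; apply: ge_sup => [|_ [v v1 <-]]; last exact: Ab.
by exists (vnorm (A *m 0)), 0 => //=; rewrite vnorm0 ler01.
Qed.

Lemma opnorm_invmx_le k c (B : 'M[R]_k) :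
  0 < c -> coercive c B -> opnorm (invmx B) <= c^-1.
Proof.
move=> c0 Bc; apply: opnorm_le => v; set w := invmx B *m v.
rewrite !vnorm_dotmx -sqrtr1 -[c^-1]gtr0_norm ?invr_gt0 // -sqrtr_sqr.
rewrite !ler_sqrt ?sqr_ge0 // exprVn -[_ ^-1]div1r ler_pdivlMr ?exprn_gt0 // => v1.
have Bw : dotmx (w^T *m B) w^T = dotmx w^T v^T.
  by rewrite dotmx_mulmxl -trmx_mul /w mulmxA mulmxV ?mul1mx // (coercive_unitmx c0 Bc).
have wv := Bc w^T; rewrite Bw in wv.
(* Expand [|c w - v|^2 >= 0] and use [c |w|^2 <= <w, v>]. *)
have := dotmx_ge0 (c *: w^T - v^T).
rewrite !(dotmxDl, dotmxDr, dotmxNl, dotmxNr, dotmxZl, dotmxZr) (dotmxC v^T).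
nra.
Qed.

End OperatorNorm.

Theorem proposition3 (R : realType) (m n l : nat) (sx seta muhat dhat : R)
  (mu : 'I_m -> nat -> 'cV[R]_n)
  (x : 'I_m -> nat -> 'cV[R]_n) (eta : 'I_m -> nat -> 'cV[R]_l) (t : nat) :
  (0 < m)%N -> (0 < n)%N -> (0 < l)%N ->
  0 < sx -> 0 < seta -> 0 < dhat ->
  has_ubound [set r : R | exists i j, (0 < j)%N /\ r = vnorm (mu i j)] ->
  muhat = sup [set r : R | exists i j, (0 < j)%N /\ r = vnorm (mu i j)] ->
  t%:R >= 8 * n%:R + 16 * ln (2 / dhat) ->
  t%:R >= ((16 * muhat * (Num.sqrt (4 * n%:R) + Num.sqrt (2 * ln (2 / dhat)))) / sx) ^+ 2 ->
  t%:R >= 2 * (n + l)%:R * ln (1 / dhat) ->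
  E3 sx seta muhat dhat t mu x eta ->
  opnorm (invmx (m%:R^-1 *: \sum_(i < m) gram (x i) t)) <= 8 / (sx ^+ 2 * t%:R).
Proof.
move=> m0 n0 _ sx0 _ _ _ _ _ _ _ E3x.
(* For t = 0 both sides are 0, as invmx 0 = 0 and 8 / 0 = 0. *)
have [->|t0] := eqVneq t 0%N.
  rewrite mulr0 invr0 mulr0 big1 => [|i _]; last by rewrite /gram big_geq.
  by rewrite scaler0 invmx0 //; apply: opnorm_le => v _; rewrite mul0mx vnorm0.
set c := t%:R * sx ^+ 2 / 8.
have c0 : 0 < c by rewrite divr_gt0 // mulr_gt0 ?exprn_gt0 // ltr0n lt0n.
have lmin_mubar i : 1 <= lambda_min (1%:M + mubar sx (mu i) t).
  apply: coercive_le_lambda_min _ n0 (coercive_add_outer _ _ _).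
  - by rewrite linearD /= tr_scalar_mx linearZ /= trmx_outer_sum.
  - by rewrite divr_ge0 // mulr_ge0 ?sqr_ge0.
have gram_c i : coercive c (gram (x i) t).
  have [_ lmin_gram _] := E3x i.
  apply: coercive_le (lambda_min_coercive (trmx_outer_sum _ _) n0).
  by apply: le_trans lmin_gram; rewrite ler_pMr.
have -> : 8 / (sx ^+ 2 * t%:R) = c^-1 by rewrite /c invf_div (mulrC t%:R).
exact: opnorm_invmx_le c0 (coercive_avg m0 gram_c).
Qed.
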